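(* Let $r$ be a non-negative integer and $B(x,y)=(-1)^{x+y}$. Then there exist $C\in\mathbb{Q}(q)$ and a $q$-polynomial $T(x,y)$ in $x$ and $y$ over $\mathbb{Q}$ such that $D(r,B)(x,y)=(-1)^{x+y}q^{r(x+y)}C+T(x,y)$ for all integers $x,y$.
   Context: $q$ is an indeterminate. Sums use the convention: $\sum_{i=a}^bf(i)=f(a)+\cdots+f(b)$ if $a\le b$, $0$ if $b=a-1$, and $-f(b+1)-\cdots-f(a-1)$ if $b+1\le a-1$. $D(0,B)=B$ and $D(r,B)(x,y)=\sum_{x'=x+1}^{y+1}\sum_{y'=x}^{y}D(r-1,B)(x',y')\,q^{x'+y'}$. A $q$-polynomial in $x,y$ over $\mathbb{Q}$ is a polynomial in $q^x,q^y$ with coefficients in $\mathbb{Q}(q)$. *)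

From HB Require Import structures.
From mathcomp Require Import all_boot all_order all_algebra.
From mathcomp Require Import fraction.
Set Implicit Arguments. Unset Strict Implicit. Unset Printing Implicit Defensive.
Import Order.TTheory GRing.Theory Num.Theory.
Local Open Scope ring_scope.

Definition Qq : fieldType := {fraction {poly rat}}.
Definition q : Qq := @FracField.tofrac {poly rat} 'X.

(* Generalised sum convention over integers:
   sum_{i=a}^b f i = f a + ... + f b        if a <= b,
                   = 0                      if b = a - 1,
                   = -(f (b+1) + ... + f (a-1)) if b+1 <= a-1. *)
Definition gsum (a b : int) (f : int -> Qq) : Qq :=
  if (a <= b)%R then \sum_(k < absz (b - a + 1)%R) f (a + (k : nat)%:Z)%R
  else - \sum_(k < absz (a - b - 1)%R) f (b + 1 + (k : nat)%:Z)%R.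

Fixpoint D (r : nat) (B : int -> int -> Qq) (x y : int) : Qq :=
  match r with
  | O => B x y
  | r'.+1 => gsum (x + 1) (y + 1) (fun x' =>
               gsum x y (fun y' => D r' B x' y' * q ^ (x' + y')))
  end.

(* A q-polynomial in x,y over Q: T(x,y) = P(q^x, q^y) for a bivariate
   polynomial P with coefficients in Q(q) (inner variable <-> q^x,
   outer variable <-> q^y). *)
Definition qpoly_eval (P : {poly {poly Qq}}) (x y : int) : Qq :=
  (P.[(q ^ y)%:P]).[q ^ x].

(* On a product of exponentials c v^x' w^y' the double sum factors into two
   geometric sums, so Dstep maps q-monomials, hence q-polynomials, to q-polynomials.
   For u = -q^(r+1) the product (u^(y+2) - u^(x+1)) (u^(y+1) - u^x) has the
   cross term -2u^2 u^x u^y, a multiple of (-1)^(x+y) q^((r+1)(x+y)), while its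
   square terms are q-polynomials because u^2 = q^(2(r+1)) has no sign. *)

From mathcomp Require Import all_boot all_order all_algebra.
From mathcomp Require Import fraction.
From mathcomp Require Import ring zify.
Set Implicit Arguments. Unset Strict Implicit. Unset Printing Implicit Defensive.
Import Order.TTheory GRing.Theory Num.Theory.
Local Open Scope ring_scope.

Lemma q_neq0 : q != 0.
Proof. by rewrite /q tofrac_eq0 polyX_eq0. Qed.

Lemma qXn_neq1 (n : nat) : (0 < n)%N -> q ^+ n != 1.
Proof.
move=> n_gt0; rewrite /q -tofracXn -[1 : Qq]/(FracField.tofrac 1) tofrac_eq.
apply/eqP => Xn1; have := size_polyXn rat n; rewrite Xn1 size_poly1; by case: n n_gt0 {Xn1}.
Qed.

Lemma exprnzC (t : Qq) (n : nat) (z : int) : (t ^+ n) ^ z = (t ^ z) ^+ n.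
Proof. by rewrite !exprnP exprzAC. Qed.

Section GeneralisedSums.

Implicit Types (a b : int) (f g : int -> Qq).

Lemma gsum_ext a b f g : (forall k, f k = g k) -> gsum a b f = gsum a b g.
Proof. by move=> fg; rewrite /gsum; case: ifP => _; [|congr (- _)]; apply: eq_bigr. Qed.

Lemma gsumD a b f g : gsum a b (fun k => f k + g k) = gsum a b f + gsum a b g.
Proof. by rewrite /gsum; case: ifP => _; rewrite big_split //= opprD. Qed.

Lemma gsumMl a b c f : gsum a b (fun k => c * f k) = c * gsum a b f.
Proof. by rewrite /gsum; case: ifP => _; rewrite -mulr_sumr // mulrN. Qed.

Lemma gsumMr a b c f : gsum a b (fun k => f k * c) = gsum a b f * c.
Proof. by rewrite /gsum; case: ifP => _; rewrite -mulr_suml // mulNr. Qed.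

Lemma gsum_sum a b (I : Type) (s : seq I) (F : I -> int -> Qq) :
  gsum a b (fun k => \sum_(i <- s) F i k) = \sum_(i <- s) gsum a b (F i).
Proof. by rewrite /gsum; case: ifP => _; rewrite exchange_big // sumrN. Qed.

Lemma gsum_telescope a b f g :
  (forall k, f k = g (k + 1) - g k) -> gsum a b f = g (b + 1) - g a.
Proof.
move=> fE; have tele (c : int) (n : nat) : \sum_(k < n) f (c + k%:Z) = g (c + n%:Z) - g c.
  rewrite -(big_mkord xpredT (fun k => f (c + k%:Z))) -[X in _ - g X]addr0.
  apply: (@telescope_sumr_eq _ 0 n (fun k => g (c + k%:Z))) => // k _.
  by rewrite fE -addn1 PoszD addrA.
rewrite /gsum; case: ifP => le_ab; rewrite tele gez0_abs; try lia.
  by congr (g _ - _); ring.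
by rewrite opprB; congr (_ - g _); ring.
Qed.

Lemma gsum_geom a b (t : Qq) : t != 0 -> t != 1 ->
  gsum a b (fun k => t ^ k) = (t ^ (b + 1) - t ^ a) / (t - 1).
Proof.
move=> t0 t1; have t1' : t - 1 != 0 by rewrite subr_eq0.
rewrite mulrBl; apply: (gsum_telescope _ _ (g := fun k => t ^ k / (t - 1))) => k.
by rewrite expfzDr // expr1z -mulrBl -{3}[t ^ k]mulr1 -mulrBr mulfK.
Qed.

End GeneralisedSums.

Definition Dstep (f : int -> int -> Qq) (x y : int) : Qq :=
  gsum (x + 1) (y + 1) (fun x' => gsum x y (fun y' => f x' y' * q ^ (x' + y'))).

Lemma D_succ r B x y : D r.+1 B x y = Dstep (D r B) x y.
Proof. by []. Qed.

Lemma Dstep_ext f g x y : (forall x y, f x y = g x y) -> Dstep f x y = Dstep g x y.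
Proof. by move=> fg; apply: gsum_ext => x'; apply: gsum_ext => y'; rewrite fg. Qed.

Lemma DstepD f g x y : Dstep (fun x y => f x y + g x y) x y = Dstep f x y + Dstep g x y.
Proof.
rewrite /Dstep -gsumD; apply: gsum_ext => x'.
by rewrite -gsumD; apply: gsum_ext => y'; rewrite mulrDl.
Qed.

Lemma Dstep_sum (I : Type) (s : seq I) (F : I -> int -> int -> Qq) x y :
  Dstep (fun x y => \sum_(i <- s) F i x y) x y = \sum_(i <- s) Dstep (F i) x y.
Proof.
rewrite /Dstep -gsum_sum; apply: gsum_ext => x'.
by rewrite -gsum_sum; apply: gsum_ext => y'; rewrite mulr_suml.
Qed.

Lemma Dstep_geom c (v w : Qq) (f : int -> int -> Qq) x y :
    v != 0 -> v != 1 -> w != 0 -> w != 1 ->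
    (forall x' y', f x' y' * q ^ (x' + y') = c * v ^ x' * w ^ y') ->
  Dstep f x y =
  c * ((v ^ y * v ^+ 2 - v ^ x * v) / (v - 1)) * ((w ^ y * w - w ^ x) / (w - 1)).
Proof.
move=> v0 v1 w0 w1 fE; rewrite /Dstep.
under gsum_ext => x' do under gsum_ext => y' do rewrite fE.
under gsum_ext => x' do rewrite gsumMl.
rewrite gsumMr gsumMl !gsum_geom // !expfzDr // ?expr1z //.
by rewrite expr2 !mulrA.
Qed.

Definition is_qpoly (f : int -> int -> Qq) : Prop :=
  exists P, forall x y, f x y = qpoly_eval P x y.

Section QPolynomials.

Implicit Types f g : int -> int -> Qq.

Lemma qpoly_ext f g : is_qpoly f -> (forall x y, f x y = g x y) -> is_qpoly g.
Proof. by move=> [P fP] fg; exists P => x y; rewrite -fg. Qed.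

Lemma qpolyC c : is_qpoly (fun _ _ => c).
Proof. by exists c%:P%:P => x y; rewrite /qpoly_eval !hornerC. Qed.

Lemma qpoly_powx n : is_qpoly (fun x _ => (q ^ x) ^+ n).
Proof. by exists ('X^n)%:P => x y; rewrite /qpoly_eval hornerC hornerXn. Qed.

Lemma qpoly_powy n : is_qpoly (fun _ y => (q ^ y) ^+ n).
Proof. by exists 'X^n => x y; rewrite /qpoly_eval hornerXn -polyC_exp hornerC. Qed.

Lemma qpolyD f g : is_qpoly f -> is_qpoly g -> is_qpoly (fun x y => f x y + g x y).
Proof.
by move=> [P fP] [Q gQ]; exists (P + Q) => x y; rewrite /qpoly_eval !hornerD fP gQ.
Qed.

Lemma qpolyB f g : is_qpoly f -> is_qpoly g -> is_qpoly (fun x y => f x y - g x y).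
Proof.
by move=> [P fP] [Q gQ]; exists (P - Q) => x y; rewrite /qpoly_eval !hornerD !hornerN fP gQ.
Qed.

Lemma qpolyM f g : is_qpoly f -> is_qpoly g -> is_qpoly (fun x y => f x y * g x y).
Proof.
by move=> [P fP] [Q gQ]; exists (P * Q) => x y; rewrite /qpoly_eval !hornerM fP gQ.
Qed.

Lemma qpoly_sum (I : Type) (s : seq I) (F : I -> int -> int -> Qq) :
  (forall i, is_qpoly (F i)) -> is_qpoly (fun x y => \sum_(i <- s) F i x y).
Proof.
move=> FP; elim: s => [|i s IH].
  by apply: qpoly_ext (qpolyC 0) _ => x y; rewrite big_nil.
by apply: qpoly_ext (qpolyD (FP i) IH) _ => x y; rewrite big_cons.
Qed.

Lemma qpoly_evalE P x y : qpoly_eval P x y =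
  \sum_(j < size P) \sum_(i < size P`_j) P`_j`_i * (q ^ x) ^+ i * (q ^ y) ^+ j.
Proof.
rewrite /qpoly_eval (horner_coef P) horner_sum; apply: eq_bigr => j _.
by rewrite hornerM -polyC_exp hornerC horner_coef mulr_suml.
Qed.

End QPolynomials.

Ltac qpoly_closure :=
  repeat match goal with
  | |- is_qpoly (fun _ _ => ?c) => apply: qpolyC
  | |- is_qpoly (fun x _ => (q ^ x) ^+ _) => apply: qpoly_powx
  | |- is_qpoly (fun _ y => (q ^ y) ^+ _) => apply: qpoly_powy
  | |- is_qpoly (fun _ _ => _ - _) => apply: qpolyB
  | |- is_qpoly (fun _ _ => _ + _) => apply: qpolyD
  | |- is_qpoly (fun _ _ => _ * _) => apply: qpolyM
  end.

Lemma qpoly_Dstep_monomial c i j :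
  is_qpoly (Dstep (fun x y => c * (q ^ x) ^+ i * (q ^ y) ^+ j)).
Proof.
set v := q ^+ i.+1; set w := q ^+ j.+1.
have v0 : v != 0 by rewrite expf_neq0 ?q_neq0.
have w0 : w != 0 by rewrite expf_neq0 ?q_neq0.
have v1 : v != 1 by rewrite qXn_neq1.
have w1 : w != 1 by rewrite qXn_neq1.
have monoE x' y' : c * (q ^ x') ^+ i * (q ^ y') ^+ j * q ^ (x' + y') = c * v ^ x' * w ^ y'.
  by rewrite expfzDr ?q_neq0 // /v /w !exprnzC !exprSr; ring.
apply: (qpoly_ext (f := fun x y => c * (((q ^ y) ^+ i.+1 * v ^+ 2 - (q ^ x) ^+ i.+1 * v) / (v - 1))
                                     * (((q ^ y) ^+ j.+1 * w - (q ^ x) ^+ j.+1) / (w - 1)))).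
  by qpoly_closure.
by move=> x y; rewrite (Dstep_geom _ _ v0 v1 w0 w1 monoE) /v /w !exprnzC.
Qed.

Lemma qpoly_Dstep f : is_qpoly f -> is_qpoly (Dstep f).
Proof.
move=> [P fP].
apply: (qpoly_ext (f := fun x y => \sum_(j < size P) \sum_(i < size P`_j)
          Dstep (fun x y => P`_j`_i * (q ^ x) ^+ i * (q ^ y) ^+ j) x y)).
  by apply: qpoly_sum => j; apply: qpoly_sum => i; apply: qpoly_Dstep_monomial.
move=> x y; rewrite (Dstep_ext _ _ fP).
under Dstep_ext => x' y' do rewrite qpoly_evalE.
by rewrite Dstep_sum; apply: eq_bigr => j _; rewrite Dstep_sum.
Qed.

Lemma oppqX_exprz (r : nat) (z : int) : (- q ^+ r) ^ z = (-1) ^ z * q ^ (r%:Z * z).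
Proof. by rewrite -exprz_exp -exprnP -expfzMl mulN1r. Qed.

Lemma double_geom_expand (F : fieldType) (C u X Y : F) : u - 1 != 0 ->
  C * ((Y * u ^+ 2 - X * u) / (u - 1)) * ((Y * u - X) / (u - 1)) =
  X * Y * (- 2%:R * u ^+ 2 * C / (u - 1) ^+ 2)
  + C / (u - 1) ^+ 2 * (u ^+ 3 * (Y * Y) + u * (X * X)).
Proof. by move=> u1; field; rewrite u1. Qed.

Lemma Dstep_alt r C : exists C' T, is_qpoly T /\ forall x y,
  Dstep (fun x y => (- q ^+ r) ^ (x + y) * C) x y = (- q ^+ r.+1) ^ (x + y) * C' + T x y.
Proof.
set u := - q ^+ r.+1.
have u0 : u != 0 by rewrite oppr_eq0 expf_neq0 ?q_neq0.
have u2 : u ^+ 2 = q ^+ (r.+1 + r.+1) by rewrite sqrrN expr2 exprD.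
have u1 : u != 1.
  by apply: contraNneq (qXn_neq1 (n := r.+1 + r.+1) isT) => u_1; rewrite -u2 u_1 expr1n.
have u1' : u - 1 != 0 by rewrite subr_eq0.
have a0 : - q ^+ r != 0 by rewrite oppr_eq0 expf_neq0 ?q_neq0.
have uE z : u ^ z = (- q ^+ r) ^ z * q ^ z by rewrite -expfzMl mulNr -exprSr.
have altE (x' y' : int) : (- q ^+ r) ^ (x' + y') * C * q ^ (x' + y') = C * u ^ x' * u ^ y'.
  by rewrite !uE (expfzDr _ _ a0) (expfzDr _ _ q_neq0); ring.
have sqE z : (q ^ z) ^+ (r.+1 + r.+1) = u ^ z * u ^ z.
  by rewrite -expfzMl -expr2 u2 exprnzC.
exists (- 2%:R * u ^+ 2 * C / (u - 1) ^+ 2).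
exists (fun x y => C / (u - 1) ^+ 2 * (u ^+ 3 * (q ^ y) ^+ (r.+1 + r.+1)
                                      + u * (q ^ x) ^+ (r.+1 + r.+1))).
split; first by qpoly_closure.
move=> x y; rewrite (Dstep_geom _ _ u0 u1 u0 u1 altE) !sqE (expfzDr _ _ u0).
exact: (double_geom_expand _ _ _ u1').
Qed.

Lemma D_alt_decomposition r : exists C T, is_qpoly T /\ forall x y,
  D r (fun x y => (-1 : Qq) ^ (x + y)) x y = (- q ^+ r) ^ (x + y) * C + T x y.
Proof.
elim: r => [|r [C [T [qT DE]]]].
  exists 1, (fun _ _ => 0); split; first exact: qpolyC.
  by move=> x y; rewrite expr0 mulr1 addr0.
have [C' [T' [qT' DstepE]]] := Dstep_alt r C.
exists C', (fun x y => T' x y + Dstep T x y); split; first exact: qpolyD qT' (qpoly_Dstep qT).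
by move=> x y; rewrite D_succ (Dstep_ext _ _ DE) DstepD DstepE addrA.
Qed.

Theorem lemma18 (r : nat) :
  exists (C : Qq) (P : {poly {poly Qq}}),
    forall x y : int,
      D r (fun x y : int => (-1 : Qq) ^ (x + y)) x y
      = (-1) ^ (x + y) * q ^ (r%:Z * (x + y)) * C + qpoly_eval P x y.
Proof.
have [C [T [[P TP] DE]]] := D_alt_decomposition r.
by exists C, P => x y; rewrite DE TP oppqX_exprz.
Qed.
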